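(* Let $\mathbb{\Lambda}=\{\pm\lambda^n:n\in\mathbb{Z}\}$ with $\lambda$ one of: $\lambda=2$; $\lambda=\sigma$ the plastic number; or $\lambda>1$ with $1=\lambda^b-\lambda^a$ for mutually prime integers $0\le a<b\le 62$, $(a,b)\notin\{(1,3),(4,5)\}$. Let $\ast$ be any non-trivial operation of the following form: for $\lambda\neq\sigma$, $(f\ast g)(k)=c\sum_{(p,q)\in\mathbb{\Lambda}^2,\,p+q=1}f(pk)g(qk)$ with $c\neq0$; for $\lambda=\sigma$, $(f\ast g)(k)=c_1\sum_{(p,q)\in T_1}f(pk)g(qk)+c_2\sum_{(p,q)\in T_2}f(pk)g(qk)$ with $(c_1,c_2)\neq(0,0)$. Then $\ast$ is not associative: the identity $(f\ast g)\ast h=f\ast(g\ast h)$ does not hold for all absolutely summable functions $f,g,h$ on $\mathbb{\Lambda}$.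
   Context: The plastic number $\sigma\approx1.325$ is the unique real root of $x^3-x-1=0$. $T_1=\{(\sigma^3,-\sigma),(-\sigma,\sigma^3),(\sigma^2,-\sigma^{-1}),(-\sigma^{-1},\sigma^2),(\sigma^{-3},\sigma^{-2}),(\sigma^{-2},\sigma^{-3})\}$ and $T_2=\{(\sigma^5,-\sigma^4),(-\sigma^4,\sigma^5),(\sigma,-\sigma^{-4}),(-\sigma^{-4},\sigma),(\sigma^{-5},\sigma^{-1}),(\sigma^{-1},\sigma^{-5})\}$. Functions are $f:\mathbb{\Lambda}\to\mathbb{C}$ with $\sum_k|f(k)|<\infty$. *)

From HB Require Import structures.
From mathcomp Require Import all_boot all_algebra.
From mathcomp Require Import all_classical all_reals all_analysis.
From mathcomp Require Import complex.
From mathcomp.analysis Require showcase.summability.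

Set Implicit Arguments.
Unset Strict Implicit.
Unset Printing Implicit Defensive.
Import GRing.Theory Num.Theory.
Local Open Scope ring_scope.

(* The group Λ = {± λ^n : n ∈ ℤ} (λ > 1) is parametrised bijectively by
   (s, n) : bool * int, standing for (-1)^s λ^n. *)
Definition Lam := (bool * int)%type.

Definition lamv (R : realType) (lam : R) (p : Lam) : R :=
  (-1) ^+ p.1 * lam ^ p.2.

Definition Lmul (p k : Lam) : Lam := (addb p.1 k.1, p.2 + k.2).

(* unordered sum over a countable index set: limit of finite partial sums
   along the filter of finite subsets (MathComp-Analysis showcase) *)
Definition csum (R : realType) (I : choiceType) (F : I -> R[i]) : R[i] :=
  @summability.sum I R[i] (R[i])^o F.

Definition abs_summable (R : realType) (f : Lam -> R[i]) : Prop :=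
  summable setT (fun k : Lam => (Normc.normc (f k))%:E).

Definition op_gen (R : realType) (lam : R) (c : R[i])
    (f g : Lam -> R[i]) : Lam -> R[i] :=
  fun k => c * csum (fun pq : Lam * Lam =>
     if lamv lam pq.1 + lamv lam pq.2 == 1
     then f (Lmul pq.1 k) * g (Lmul pq.2 k) else 0).

(* T1 = {(σ^3,-σ),(-σ,σ^3),(σ^2,-σ^-1),(-σ^-1,σ^2),(σ^-3,σ^-2),(σ^-2,σ^-3)} *)
Definition T1 : seq (Lam * Lam) :=
  [:: ((false, 3%:Z), (true, 1%:Z)); ((true, 1%:Z), (false, 3%:Z));
      ((false, 2%:Z), (true, (-1)%R)); ((true, (-1)%R), (false, 2%:Z));
      ((false, (-3)%R), (false, (-2)%R)); ((false, (-2)%R), (false, (-3)%R))].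

(* T2 = {(σ^5,-σ^4),(-σ^4,σ^5),(σ,-σ^-4),(-σ^-4,σ),(σ^-5,σ^-1),(σ^-1,σ^-5)} *)
Definition T2 : seq (Lam * Lam) :=
  [:: ((false, 5%:Z), (true, 4%:Z)); ((true, 4%:Z), (false, 5%:Z));
      ((false, 1%:Z), (true, (-4)%R)); ((true, (-4)%R), (false, 1%:Z));
      ((false, (-5)%R), (false, (-1)%R)); ((false, (-1)%R), (false, (-5)%R))].

Definition op_plastic (R : realType) (c1 c2 : R[i])
    (f g : Lam -> R[i]) : Lam -> R[i] :=
  fun k => c1 * (\sum_(pq <- T1) f (Lmul pq.1 k) * g (Lmul pq.2 k))
         + c2 * (\sum_(pq <- T2) f (Lmul pq.1 k) * g (Lmul pq.2 k)).

Definition assoc_on_l1 (R : realType)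
    (op : (Lam -> R[i]) -> (Lam -> R[i]) -> (Lam -> R[i])) : Prop :=
  forall f g h : Lam -> R[i],
    abs_summable f -> abs_summable g -> abs_summable h ->
    op (op f g) h = op f (op g h).

(* λ is the plastic number σ: the unique real root of x^3 - x - 1 *)
Definition is_plastic (R : realType) (lam : R) : Prop :=
  lam ^+ 3 - lam - 1 = 0.

Definition admissible (R : realType) (lam : R) : Prop :=
  lam = 2 \/ is_plastic lam \/
  (1 < lam /\ exists a b : nat,
     [&& coprime a b, (a < b)%N, (b <= 62)%N,
         (a, b) != (1%N, 3%N) & (a, b) != (4%N, 5%N)] /\
     lam ^+ b - lam ^+ a = 1).

(* For a Dirac function [delta w], the sum defining [(F * delta w)(k)] has the
   single term [p = s/k, q = w/k], where [s + w = k], so it equals [c F(s)].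
   Hence [delta v * delta (-v)] vanishes (no [p + q = 1] has [p/q = -1]), while
   [((delta u * delta v) * delta (-v))(u) = c^2] as soon as [u + v] lies in Λ;
   for admissible [λ ≠ σ] such [u, v] exist: [1 + 1 = 2], [λ^b + (-λ^a) = 1].
   For [λ = σ] the same three Dirac functions with [(u, v) = (σ^3, -σ) ∈ T1],
   resp. [(σ^5, -σ^4) ∈ T2], give [c1^2], resp. [c2^2], against [0]. *)
From HB Require Import structures.
From mathcomp Require Import all_boot all_algebra.
From mathcomp Require Import all_classical all_reals all_analysis.
From mathcomp Require Import complex.
From mathcomp.analysis Require showcase.summability.
Import GRing.Theory Num.Theory.
Import order.Order.TTheory.

Set Implicit Arguments.
Unset Strict Implicit.
Unset Printing Implicit Defensive.
Local Open Scope ring_scope.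

Section UnorderedSum.
Import finmap.
Variables (R : realType) (I : choiceType).

Lemma csum_single (F : I -> R[i]) (i0 : I) :
  (forall i, i != i0 -> F i = 0) -> csum F = F i0.
Proof.
move=> F0; rewrite /csum /summability.sum.
apply: (@cvg_lim _ (@norm_hausdorff R[i] (R[i])^o) _ _ summability.totally_filter).
apply: cvg_near_cst; first exact: summability.totally_filter.
exists [fset i0]%fset => // B /= /fsubsetP sB.
have i0B : i0 \in B by apply: sB; rewrite in_fset1.
rewrite /summability.partial_sum (bigD1 (FSetSub i0B)) //= big1 ?addr0 //.
by move=> j j_neq; apply: F0; apply: contra j_neq => /eqP j_i0; apply/eqP/val_inj.
Qed.

Lemma csum_eq0 (F : I -> R[i]) : (forall i, F i = 0) -> csum F = 0.
Proof.
move=> F0; rewrite /csum /summability.sum.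
have -> : summability.partial_sum F = fun=> 0.
  by apply: funext => B; rewrite /summability.partial_sum big1.
exact: (@lim_cst _ (@norm_hausdorff R[i] (R[i])^o) _ _ summability.totally_filter).
Qed.

End UnorderedSum.

Definition delta (R : realType) (a : Lam) : Lam -> R[i] :=
  fun k => if k == a then 1 else 0.

Lemma abs_summable_delta (R : realType) (a : Lam) : abs_summable (delta R a).
Proof.
rewrite /abs_summable /summable.
have -> : \esum_(x in setT) `|(Normc.normc (delta R a x))%:E|%E =
          \esum_(x in [set a]) `|(Normc.normc (delta R a x))%:E|%E.
  rewrite [RHS]esum_mkcond; apply: eq_esum => x _.
  have [->|x_neq] := eqVneq x a; first by rewrite mem_set.
  rewrite memNset; last by move=> /= x_a; rewrite x_a eqxx in x_neq.
  by rewrite /delta (negbTE x_neq) Normc.normc0 /= ?normr0 ?abse0.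
by rewrite esum_set1 ?ltry.
Qed.

Lemma not_assoc_on_deltas (R : realType)
    (op : (Lam -> R[i]) -> (Lam -> R[i]) -> Lam -> R[i]) (u v w k : Lam) :
  op (op (delta R u) (delta R v)) (delta R w) k
    != op (delta R u) (op (delta R v) (delta R w)) k ->
  ~ assoc_on_l1 op.
Proof. by move=> /eqP neq assoc; apply: neq; rewrite assoc //; apply: abs_summable_delta. Qed.

Definition Linv (k : Lam) : Lam := (k.1, - k.2).

Definition Lopp (k : Lam) : Lam := (~~ k.1, k.2).

Lemma LmulK (p k : Lam) : Lmul (Lmul p k) (Linv k) = p.
Proof. by case: p k => [s n] [t m]; rewrite /Lmul /= addbK addrK. Qed.

Lemma LmulVK (p k : Lam) : Lmul (Lmul p (Linv k)) k = p.
Proof. by case: p k => [s n] [t m]; rewrite /Lmul /= addbK addrNK. Qed.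

Section LamValue.
Variables (R : realType) (lam : R).
Hypothesis lam_neq0 : lam != 0.

Lemma lamvM (p k : Lam) : lamv lam (Lmul p k) = lamv lam p * lamv lam k.
Proof.
by case: p k => [s n] [t m]; rewrite /lamv /= signr_addb expfzDr // mulrACA.
Qed.

Lemma lamv_neq0 (p : Lam) : lamv lam p != 0.
Proof. by rewrite mulf_neq0 ?signr_eq0 ?expfz_neq0. Qed.

Lemma lamvV (k : Lam) : lamv lam (Linv k) = (lamv lam k)^-1.
Proof.
apply: (mulIf (lamv_neq0 k)); rewrite mulVf ?lamv_neq0 // -lamvM.
by case: k => [s n]; rewrite /lamv /Lmul /= addbb addNr mulr1.
Qed.

End LamValue.

Lemma lamvN (R : realType) (lam : R) (k : Lam) :
  lamv lam (Lopp k) = - lamv lam k.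
Proof. by case: k => [[] n]; rewrite /lamv /= ?expr1 ?expr0 ?mulN1r ?mul1r ?opprK. Qed.

Lemma lamv_inj (R : realType) (lam : R) : 1 < lam -> injective (lamv lam).
Proof.
move=> lam_gt1 [s n] [t m]; rewrite /lamv /= => e.
have lam_gt0 : 0 < lam := lt_trans ltr01 lam_gt1.
have enm : lam ^ n = lam ^ m.
  move/(congr1 Num.norm): e.
  by rewrite !normrM !normr_sign !mul1r !gtr0_norm ?exprz_gt0.
have nm : n = m by apply/eqP; rewrite eq_le -!(ler_eXz2l lam_gt1) enm lexx.
rewrite nm in enm e *; congr (_, _).
by move/(mulIf (expfz_neq0 _ (lt0r_neq0 lam_gt0))): e => /signr_inj.
Qed.

Section GeneralOperation.
Variables (R : realType) (lam : R).
Hypothesis lam_gt1 : 1 < lam.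
Let lam_neq0 : lam != 0 := lt0r_neq0 (lt_trans ltr01 lam_gt1).
Notation L := (lamv lam).

Lemma op_gen_delta_r (c : R[i]) (F : Lam -> R[i]) (w k s : Lam) :
  L s + L w = L k -> op_gen lam c F (delta R w) k = c * F s.
Proof.
move=> swk; rewrite /op_gen (@csum_single _ _ _ (Lmul s (Linv k), Lmul w (Linv k))) /=.
  rewrite !LmulVK /delta eqxx mulr1 !lamvM // lamvV // -mulrDl swk.
  by rewrite mulfV ?lamv_neq0 // eqxx.
move=> [p q] /= pq_neq; case: ifP => // /eqP pq1; rewrite /delta.
case: eqP => [qk_w|_]; last by rewrite mulr0.
have pk_s : Lmul p k = s.
  apply: (lamv_inj lam_gt1); rewrite lamvM // -[L p](addrK (L q)) pq1.
  by rewrite mulrBl mul1r -lamvM // qk_w -swk addrK.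
by rewrite -pk_s -qk_w !LmulK eqxx in pq_neq.
Qed.

Lemma op_gen_delta_opp (c : R[i]) (v : Lam) :
  op_gen lam c (delta R v) (delta R (Lopp v)) = fun=> 0.
Proof.
apply: funext => k; rewrite /op_gen csum_eq0 ?mulr0 // => -[p q] /=.
case: ifP => // /eqP pq1; rewrite /delta.
case: eqP => [pk_v|_]; last by rewrite mul0r.
case: eqP => [qk_v'|_]; last by rewrite mulr0.
have : L k = 0.
  by rewrite -[L k]mul1r -pq1 mulrDl -!lamvM // pk_v qk_v' lamvN subrr.
by move/eqP; rewrite (negbTE (lamv_neq0 lam_neq0 _)).
Qed.

Lemma op_gen0r (c : R[i]) (F : Lam -> R[i]) : op_gen lam c F (fun=> 0) = fun=> 0.
Proof.
apply: funext => k; rewrite /op_gen csum_eq0 ?mulr0 // => pq.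
by case: ifP => // _; rewrite mulr0.
Qed.

Lemma op_gen_not_assoc (c : R[i]) (u v s : Lam) :
  c != 0 -> L u + L v = L s -> ~ assoc_on_l1 (op_gen lam c).
Proof.
move=> c_neq0 uvs; apply: (@not_assoc_on_deltas _ _ u v (Lopp v) u).
rewrite op_gen_delta_opp op_gen0r /=.
have svu : L s + L (Lopp v) = L u by rewrite lamvN -uvs addrK.
rewrite (op_gen_delta_r _ _ svu) (op_gen_delta_r _ _ uvs).
by rewrite /delta eqxx mulr1 mulf_neq0.
Qed.

End GeneralOperation.

Lemma admissible_sum_in_Lam (R : realType) (lam : R) :
  admissible lam -> ~ is_plastic lam ->
  1 < lam /\ exists u v s : Lam, lamv lam u + lamv lam v = lamv lam s.
Proof.
case=> [->|[//|[lam_gt1 [a [b [_ ba1]]]]]] _.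
  split; first by rewrite ltr1n.
  by exists (false, 0%:Z), (false, 0%:Z), (false, 1%:Z); rewrite /lamv /= !expr0 !mul1r.
split=> //; exists (false, b%:Z), (true, a%:Z), (false, 0%:Z).
by rewrite /lamv /= expr0 expr1 !mul1r mulN1r.
Qed.

Lemma op_plastic_not_assoc (R : realType) (c1 c2 : R[i]) :
  (c1, c2) != (0, 0) -> ~ assoc_on_l1 (op_plastic c1 c2).
Proof.
have [-> | c1_neq0 _] := eqVneq c1 0; last first.
  apply: (@not_assoc_on_deltas _ _ (false, 3%:Z) (true, 1%:Z) (false, 1%:Z) (false, 3%:Z)).
  rewrite /op_plastic /delta /T1 /T2 !big_cons !big_nil /=.
  by rewrite !(mul0r, mulr0, mul1r, mulr1, addr0, add0r) mulf_neq0.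
rewrite xpair_eqE eqxx /= => c2_neq0.
apply: (@not_assoc_on_deltas _ _ (false, 5%:Z) (true, 4%:Z) (false, 4%:Z) (false, 5%:Z)).
rewrite /op_plastic /delta /T1 /T2 !big_cons !big_nil /=.
by rewrite !(mul0r, mulr0, mul1r, mulr1, addr0, add0r) mulf_neq0.
Qed.

Theorem corollary1 (R : realType) (lam : R) :
  admissible lam ->
  (~ is_plastic lam ->
     forall c : R[i], c != 0 -> ~ assoc_on_l1 (op_gen lam c)) /\
  (is_plastic lam ->
     forall c1 c2 : R[i], (c1, c2) != (0, 0) ->
       ~ assoc_on_l1 (op_plastic c1 c2)).
Proof.
move=> adm; split=> [not_plastic c c_neq0 | _ c1 c2]; last exact: op_plastic_not_assoc.
have [lam_gt1 [u [v [s uvs]]]] := admissible_sum_in_Lam adm not_plastic.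
exact: op_gen_not_assoc uvs.
Qed.
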